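(* Let $m,n\ge1$, let $\mathbf{V}\in\mathbb{R}^{n\times n}$ be a nonzero symmetric matrix such that $\langle\mathbf{X}^\intercal\mathbf{X},\mathbf{V}/\|\mathbf{V}\|\rangle\ge0$ for all $\mathbf{X}\in\mathbb{R}^{m\times n}$, and let $\|\mathbf{X}\|_{\mathcal{H}}(\mathbf{V})=\big(\langle\mathbf{X}^\intercal\mathbf{X},\mathbf{V}/\|\mathbf{V}\|\rangle\big)^{1/2}$. Let $\mathcal{X}\subseteq\mathbb{R}^{m\times n}$ be a domain of inputs and $\mathcal{W}\subseteq\mathbb{R}^{m\times n}$ a set of weight matrices (the same for both classifiers), and let $\Phi(a,y)=\max\{0,1-ay\}$ be the hinge loss with $y\in\{-1,+1\}$. Define $R=\sup_{\mathbf{X}\in\mathcal{X}}\|\mathbf{X}\|$, $B=\sup_{\mathbf{W}\in\mathcal{W}}\|\mathbf{W}\|$, $R'=\sup_{\mathbf{X}\in\mathcal{X}}\|\mathbf{X}\|_{\mathcal{H}}(\mathbf{V})$, $B'=\sup_{\mathbf{W}\in\mathcal{W}}\|\mathbf{W}\|_{\mathcal{H}}(\mathbf{V})$, $c=\max_{y}\max_{a\in[-BR,BR]}|\Phi(a,y)|$ and $c'=\max_y\max_{a\in[-B'R',B'R']}|\Phi(a,y)|$. Then $R'\le R$, $B'\le B$ and $c'\le c$.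
   Context: $\langle\mathbf{A},\mathbf{B}\rangle=\sum_{i,j}a_{ij}b_{ij}$ denotes the Frobenius inner product and $\|\cdot\|$ the Frobenius norm. $R,B,c$ are the constants appearing in the generalization bound for the Frobenius-norm constrained support tensor machine, and $R',B',c'$ those appearing in the analogous bound for the kernel support matrix machine with norm $\|\cdot\|_{\mathcal{H}}(\mathbf{V})$. *)

From HB Require Import structures.
From mathcomp Require Import all_boot all_order all_algebra.
From mathcomp Require Import boolp classical_sets reals.
Set Implicit Arguments. Unset Strict Implicit. Unset Printing Implicit Defensive.
Import Order.TTheory GRing.Theory Num.Theory.
Local Open Scope ring_scope.
Local Open Scope classical_set_scope.

Definition frob {R : realType} {p q : nat} (A B : 'M[R]_(p, q)) : R :=
  \sum_(i < p) \sum_(j < q) A i j * B i j.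

Definition fnorm {R : realType} {p q : nat} (A : 'M[R]_(p, q)) : R :=
  Num.sqrt (frob A A).

Definition hnorm {R : realType} {m n : nat} (V : 'M[R]_n) (X : 'M[R]_(m, n)) : R :=
  Num.sqrt (frob (X^T *m X) ((fnorm V)^-1 *: V)).

Definition hinge {R : realType} (a y : R) : R := Num.max 0 (1 - a * y).

Definition supf {R : realType} {T : Type} (f : T -> R) (S : set T) : R :=
  sup [set f x | x in S].

Definition hinge_const {R : realType} (K : R) : R :=
  sup [set z : R | exists a y : R,
          [/\ - K <= a <= K, (y = 1 \/ y = -1) & z = `|hinge a y|]].

From HB Require Import structures.
From mathcomp Require Import all_boot all_order all_algebra.
From mathcomp Require Import boolp classical_sets reals.
From mathcomp Require Import ring lra.
Set Implicit Arguments. Unset Strict Implicit. Unset Printing Implicit Defensive.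
Import Order.TTheory GRing.Theory Num.Theory.
Local Open Scope ring_scope.
Local Open Scope classical_set_scope.

(** By Cauchy-Schwarz and submultiplicativity of the Frobenius norm,
    <X^T X, V/||V||> <= ||X^T X|| <= ||X||^2, so ||X||_H(V) <= ||X|| for every
    X; taking suprema gives R' <= R and B' <= B.  The hinge loss satisfies
    0 <= Phi(a, y) <= 1 + K on [-K, K], so the constant c is a supremum over a
    bounded set that grows with K, and B'R' <= BR gives c' <= c. *)

(* Lagrange's identity: the defect of the inequality is half of
   \sum_(i, j) (a i * b j - a j * b i) ^+ 2. *)
Lemma CauchySchwarz_sum (R : realDomainType) (I : finType) (a b : I -> R) :
  (\sum_i a i * b i) ^+ 2 <= (\sum_i a i ^+ 2) * (\sum_i b i ^+ 2).
Proof.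
have lagrange : \sum_i \sum_j (a i * b j - a j * b i) ^+ 2 =
    ((\sum_i a i ^+ 2) * (\sum_i b i ^+ 2) - (\sum_i a i * b i) ^+ 2) *+ 2.
  have e1 : (\sum_i a i ^+ 2) * (\sum_i b i ^+ 2) =
      \sum_i \sum_j a i ^+ 2 * b j ^+ 2.
    by rewrite mulr_suml; apply: eq_bigr => i _; rewrite mulr_sumr.
  have e2 : (\sum_i a i ^+ 2) * (\sum_i b i ^+ 2) =
      \sum_i \sum_j a j ^+ 2 * b i ^+ 2.
    rewrite mulrC mulr_suml; apply: eq_bigr => i _.
    by rewrite mulr_sumr; apply: eq_bigr => j _; rewrite mulrC.
  have e3 : (\sum_i a i * b i) ^+ 2 *+ 2 =
      \sum_i \sum_j (a i * b i) * (a j * b j) *+ 2.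
    rewrite expr2 mulr_suml -sumrMnl; apply: eq_bigr => i _.
    by rewrite mulr_sumr -sumrMnl.
  rewrite mulrnBl mulr2n {1}e1 e2 e3 -!big_split -sumrB /=.
  apply: eq_bigr => i _; rewrite -!big_split -sumrB /=.
  by apply: eq_bigr => j _; ring.
have : 0 <= \sum_i \sum_j (a i * b j - a j * b i) ^+ 2.
  by apply: sumr_ge0 => i _; apply: sumr_ge0 => j _; exact: sqr_ge0.
by rewrite lagrange pmulrn_lge0 // subr_ge0.
Qed.

Section Frobenius.
Variable R : realType.

Lemma frob_selfE p q (A : 'M[R]_(p, q)) :
  frob A A = \sum_i \sum_j A i j ^+ 2.
Proof. by apply: eq_bigr => i _; apply: eq_bigr => j _; rewrite expr2. Qed.

Lemma frob_self_ge0 p q (A : 'M[R]_(p, q)) : 0 <= frob A A.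
Proof.
by rewrite frob_selfE; apply: sumr_ge0 => i _; apply: sumr_ge0 => j _;
  exact: sqr_ge0.
Qed.

Lemma fnorm_ge0 p q (A : 'M[R]_(p, q)) : 0 <= fnorm A.
Proof. exact: sqrtr_ge0. Qed.

Lemma frobZr p q (A B : 'M[R]_(p, q)) k : frob A (k *: B) = k * frob A B.
Proof.
rewrite /frob mulr_sumr; apply: eq_bigr => i _; rewrite mulr_sumr.
by apply: eq_bigr => j _; rewrite mxE mulrCA.
Qed.

Lemma frob_le_fnormM p q (A B : 'M[R]_(p, q)) : frob A B <= fnorm A * fnorm B.
Proof.
have frob_sqr : frob A B ^+ 2 <= frob A A * frob B B.
  rewrite !frob_selfE /frob !pair_big /=.
  exact: CauchySchwarz_sum.
rewrite /fnorm -sqrtrM ?frob_self_ge0 //.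
by rewrite (le_trans (ler_norm _)) // -sqrtr_sqr ler_wsqrtr.
Qed.

Lemma frob_mulmx_le p q r (A : 'M[R]_(p, q)) (B : 'M[R]_(q, r)) :
  frob (A *m B) (A *m B) <= frob A A * frob B B.
Proof.
rewrite !frob_selfE [X in _ * X]exchange_big mulr_suml /=.
apply: ler_sum => i _; rewrite mulr_sumr; apply: ler_sum => k _.
by rewrite mxE; exact: CauchySchwarz_sum.
Qed.

Lemma fnorm_mulmx_le p q r (A : 'M[R]_(p, q)) (B : 'M[R]_(q, r)) :
  fnorm (A *m B) <= fnorm A * fnorm B.
Proof. by rewrite /fnorm -sqrtrM ?frob_self_ge0 // ler_wsqrtr ?frob_mulmx_le. Qed.

Lemma fnorm_tr p q (A : 'M[R]_(p, q)) : fnorm A^T = fnorm A.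
Proof.
rewrite /fnorm !frob_selfE exchange_big /=.
by congr Num.sqrt; apply: eq_bigr => i _; apply: eq_bigr => j _; rewrite mxE.
Qed.

(* (fnorm 0)^-1 = 0, so the normalized matrix has norm 0 or 1. *)
Lemma frob_normalized_le p q (A V : 'M[R]_(p, q)) :
  frob A ((fnorm V)^-1 *: V) <= fnorm A.
Proof.
rewrite frobZr; have [->|nzV] := eqVneq (fnorm V) 0.
  by rewrite invr0 mul0r fnorm_ge0.
have posV : 0 < fnorm V by rewrite lt_def nzV fnorm_ge0.
by rewrite ler_pdivrMl // mulrC frob_le_fnormM.
Qed.

(* No hypothesis on V is needed: Num.sqrt vanishes on negative numbers. *)
Lemma hnorm_le_fnorm m n (V : 'M[R]_n) (X : 'M[R]_(m, n)) :
  hnorm V X <= fnorm X.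
Proof.
have XtX_le : fnorm (X^T *m X) <= fnorm X ^+ 2.
  by rewrite expr2 (le_trans (fnorm_mulmx_le _ _)) ?fnorm_tr.
rewrite /hnorm -(ger0_norm (fnorm_ge0 X)) -sqrtr_sqr ler_wsqrtr //.
exact: le_trans (frob_normalized_le _ V) XtX_le.
Qed.

End Frobenius.

Lemma le_supf (R : realType) T (f g : T -> R) (S : set T) :
  (forall x, S x -> f x <= g x) -> (exists M, forall x, S x -> g x <= M) ->
  supf f S <= supf g S.
Proof.
move=> le_fg [M leM]; rewrite /supf.
have [[x0 Sx0]|S0] := pselect (S !=set0); last first.
  by rewrite (_ : S = set0) ?image_set0 // -subset0 => x Sx; apply: S0; exists x.
apply: sup_le.
- by move=> _ [x Sx <-]; apply/downP; exists (g x); [exists x | exact: le_fg].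
- by exists (f x0), x0.
- split; first by exists (g x0), x0.
  by exists M => _ [x Sx <-]; exact: leM.
Qed.

(* If the image has no supremum, then sup returns 0. *)
Lemma supf_ge0 (R : realType) T (f : T -> R) (S : set T) :
  (forall x, S x -> 0 <= f x) -> 0 <= supf f S.
Proof.
move=> f_ge0; rewrite /supf; set E := [set f x | x in S].
have [supE|/sup_out ->//] := pselect (has_sup E).
have [_ [x Sx _]] := supE.1.
by apply: le_trans (f_ge0 x Sx) _; apply: sup_upper_bound => //; exists x.
Qed.

Lemma abs_hinge_le (R : realType) (K a y : R) :
  - K <= a <= K -> y = 1 \/ y = -1 -> `|hinge a y| <= 1 + K.
Proof.
move=> /andP[? ?] y_pm1; rewrite /hinge ger0_norm ?le_max ?lexx //.
by rewrite ge_max; apply/andP; split; [lra | case: y_pm1 => ->; lra].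
Qed.

Lemma le_hinge_const (R : realType) (K' K : R) :
  0 <= K' -> K' <= K -> hinge_const K' <= hinge_const K.
Proof.
move=> K'_ge0 le_K'K; rewrite /hinge_const.
have hinge0 (L : R) : 0 <= L -> exists a y : R,
    [/\ - L <= a <= L, y = 1 \/ y = -1 & `|hinge 0 1| = `|hinge a y|].
  by move=> L_ge0; exists 0, 1; split => //; [apply/andP; split; lra | left].
apply: ge_sup; first by exists `|hinge 0 1|; exact: hinge0.
move=> _ [a [y [/andP[? ?] y_pm1 ->]]].
apply: sup_upper_bound; last first.
  by exists a, y; split => //; apply/andP; split; lra.
split; first by exists `|hinge 0 1|; apply: hinge0; lra.
by exists (1 + K) => _ [b [z [Kb z_pm1 ->]]]; exact: abs_hinge_le.
Qed.

Theorem theorem3 (R : realType) (m n : nat) (hm : (0 < m)%N) (hn : (0 < n)%N)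
  (V : 'M[R]_n) (hV0 : V != 0) (hVsym : V^T = V)
  (hVpsd : forall X : 'M[R]_(m, n), 0 <= frob (X^T *m X) ((fnorm V)^-1 *: V))
  (Xd Wd : set 'M[R]_(m, n))
  (hXb : exists M : R, forall X, Xd X -> fnorm X <= M)
  (hWb : exists M : R, forall W, Wd W -> fnorm W <= M) :
  let Rc := supf fnorm Xd in
  let Bc := supf fnorm Wd in
  let Rc' := supf (hnorm V) Xd in
  let Bc' := supf (hnorm V) Wd in
  let c := hinge_const (Bc * Rc) in
  let c' := hinge_const (Bc' * Rc') in
  [/\ Rc' <= Rc, Bc' <= Bc & c' <= c].
Proof.
move=> Rc Bc Rc' Bc' c c'.
have le_R : Rc' <= Rc by apply: le_supf hXb => X _; exact: hnorm_le_fnorm.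
have le_B : Bc' <= Bc by apply: le_supf hWb => W _; exact: hnorm_le_fnorm.
have supf_hnorm_ge0 (S : set 'M[R]_(m, n)) : 0 <= supf (hnorm V) S.
  by apply: supf_ge0 => X _; exact: sqrtr_ge0.
split=> //; apply: le_hinge_const.
- by apply: mulr_ge0; exact: supf_hnorm_ge0.
- by apply: ler_pM => //; exact: supf_hnorm_ge0.
Qed.
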